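(* Let $\mathcal{X}$ be a compact metric space and $k:\mathcal{X}^2\to\mathbb{R}$ a continuous, universal kernel with $\sup_{x\in\mathcal{X}}\sqrt{k(x,x)}\le K<\infty$, and let $\mathcal{H}$ be its reproducing kernel Hilbert space. Let $\ell:\mathbb{R}\to\mathbb{R}$ be non-decreasing, convex and non-negative, and suppose that for every $M>0$ there is $z_0$ such that $g\ge M$ for all $z\ge z_0$ and all $g\in\partial\ell(z)$. Let $(x_1,y_1),\ldots,(x_{m_1},y_{m_1})\in\mathcal{X}\times\{+1,-1\}$, let $M_p=\{i:y_i=+1\}$, $M_n=\{i:y_i=-1\}$, and suppose both are non-empty. Let $\lambda>0$. Then the problem $$\min_{f\in\mathcal{H},\,b\in\mathbb{R},\,\rho\in\mathbb{R}}\ -2\rho+\frac{1}{m_1}\sum_{i=1}^{m_1}\ell\big(\rho-y_i(f(x_i)+b)\big)\quad\text{subject to }\|f\|_{\mathcal{H}}^2\le\lambda^2$$ has an optimal solution. Moreover there is no duality gap: its optimal value equals $$-\inf\Big\{c_p+c_n+\lambda\|f_p-f_n\|_{\mathcal{H}}\;:\;c_p,c_n\in\mathbb{R},\ f_p\in\mathcal{U}_p[c_p],\ f_n\in\mathcal{U}_n[c_n]\Big\},$$ where for $o\in\{p,n\}$ and $c\in\mathbb{R}$, $$\mathcal{U}_o[c]=\Big\{\sum_{i\in M_o}\alpha_i k(\cdot,x_i)\;:\;\sum_{i\in M_o}\alpha_i=1,\ \alpha_i\ge0\ (i\in M_o),\ \frac{1}{m_1}\sum_{i\in M_o}\ell^*(m_1\alpha_i)\le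 c\Big\},$$ i.e. the Lagrangian dual of the first problem is this minimum-distance problem between the uncertainty sets.
   Context: A kernel is universal if its RKHS is dense in the space of continuous functions on $\mathcal{X}$ with respect to the supremum norm. $\partial\ell(z)$ is the subdifferential of $\ell$ at $z$, and $\ell^*(x)=\sup_{z\in\mathbb{R}}\{xz-\ell(z)\}$ is the convex conjugate. *)

From HB Require Import structures.
From mathcomp Require Import all_boot all_order all_algebra.
From mathcomp Require Import all_classical all_reals all_analysis.
Set Implicit Arguments. Unset Strict Implicit. Unset Printing Implicit Defensive.
Import Order.TTheory GRing.Theory Num.Theory.
Import numFieldNormedType.Exports.
Local Open Scope classical_set_scope.
Local Open Scope ring_scope.

Section Defs.
Variables (R : realType) (X : Type).

Definition hnorm (ip : (X -> R) -> (X -> R) -> R) (f : X -> R) : R :=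
  Num.sqrt (ip f f).

Record is_RKHS (k : X -> X -> R) (Hs : set (X -> R))
    (ip : (X -> R) -> (X -> R) -> R) : Prop := {
  rkhs_zero : Hs (fun _ => 0);
  rkhs_add : forall f g, Hs f -> Hs g -> Hs (fun x => f x + g x);
  rkhs_scale : forall (a : R) f, Hs f -> Hs (fun x => a * f x);
  rkhs_sym : forall f g, Hs f -> Hs g -> ip f g = ip g f;
  rkhs_lin : forall (a : R) f g h, Hs f -> Hs g -> Hs h ->
      ip (fun x => a * f x + g x) h = a * ip f h + ip g h;
  rkhs_pos : forall f, Hs f -> 0 <= ip f f;
  rkhs_def : forall f, Hs f -> ip f f = 0 -> f = (fun _ => 0);
  rkhs_complete : forall u : nat -> (X -> R), (forall n, Hs (u n)) ->
      (forall e : R, 0 < e -> exists N, forall m n, (N <= m)%N -> (N <= n)%N ->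
          hnorm ip (fun x => u m x - u n x) < e) ->
      exists f, Hs f /\ (forall e : R, 0 < e -> exists N, forall n, (N <= n)%N ->
          hnorm ip (fun x => u n x - f x) < e);
  rkhs_kernel_in : forall y, Hs (fun x => k x y);
  rkhs_reproducing : forall f y, Hs f -> f y = ip f (fun x => k x y)
}.

Definition universal_space {T : topologicalType} (Hs : set (T -> R)) : Prop :=
  forall g : T -> R, continuous g -> forall e : R, 0 < e ->
    exists f, Hs f /\ forall x, `|g x - f x| < e.

Definition convex_fun (l : R -> R) : Prop :=
  forall x y t : R, 0 <= t -> t <= 1 ->
    l (t * x + (1 - t) * y) <= t * l x + (1 - t) * l y.

Definition subgrad (l : R -> R) (z g : R) : Prop :=
  forall w : R, l z + g * (w - z) <= l w.

Definition fconj (l : R -> R) (x : R) : \bar R :=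
  ereal_sup [set ((x * z - l z)%:E) | z in [set: R]].

End Defs.

Section Problem.
Variables (R : realType) (X : Type).
Variables (k : X -> X -> R) (l : R -> R) (m1 : nat)
          (xs : 'I_m1 -> X) (y : 'I_m1 -> R).

Definition primal_obj (f : X -> R) (b rho : R) : R :=
  - (2 * rho) + m1%:R^-1 * \sum_(i < m1) l (rho - y i * (f (xs i) + b)).

(* uncertainty set U_o[c] with M_o = [i | y i = s] (s = 1 for p, s = -1 for n) *)
Definition Uset (s c : R) : set (X -> R) :=
  [set f | exists alpha : 'I_m1 -> R,
     (forall i, y i = s -> 0 <= alpha i) /\
     \sum_(i < m1 | y i == s) alpha i = 1 /\
     ((m1%:R^-1)%:E * \sum_(i < m1 | y i == s) fconj l (m1%:R * alpha i)
        <= c%:E)%E /\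
     f = (fun x => \sum_(i < m1 | y i == s) alpha i * k x (xs i))].

End Problem.

From HB Require Import structures.
From mathcomp Require Import all_boot all_order all_algebra.
From mathcomp Require Import all_classical all_reals all_analysis.
From mathcomp.algebra_tactics Require Import ring lra.
Import Order.TTheory GRing.Theory Num.Theory.
Import numFieldNormedType.Exports.
Local Open Scope classical_set_scope.
Local Open Scope ring_scope.

(* Weak duality is Fenchel-Young plus Cauchy-Schwarz.  For fixed [f], the infimum over [b] and
   [rho] is attained at a Lagrangian value: choosing them so that each class carries subgradients
   of [l] of total mass [m1] makes Fenchel-Young an equality.  A primal optimum is the limit of
   minimal-norm near-optimal points, a Cauchy sequence by the parallelogram law since midpoints of
   near-optimal points are near-optimal; the limit dominates every Lagrangian value, hence is
   optimal.  For the absence of a gap, smooth the dual objective into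
   [- lambda * sqrt (|w_a|^2 + ep^2) - E(a)], with [w_a = sum_i a_i y_i k(., x_i)] and
   [E(a) = m1^-1 * sum_i l^*(m1 a_i)]: if [aS] almost maximizes it, the first-order condition at
   [aS] shows that every Lagrangian value of [lambda * w_aS / sqrt (|w_aS|^2 + ep^2)] is within
   [O(ep)] of the dual value.  A dual point is the same as a pair of points of [U_p] and [U_n],
   with [w_a = f_p - f_n]. *)

Section RealFacts.
Context {R : realType}.

Lemma ler_pdiv_cross (u v x y : R) : 0 < u -> 0 < v ->
  x * v <= y * u -> x / u <= y / v.
Proof. by move=> hu hv h; rewrite ler_pdivrMr// mulrAC ler_pdivlMr. Qed.

Lemma sum_le_card {I : finType} (J : pred I) (F : I -> R) {c : R} :
  0 <= c -> (forall i, J i -> F i <= c) -> \sum_(i | J i) F i <= c * #|I|%:R.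
Proof.
move=> c0 Fc; apply: le_trans (ler_sum _ Fc) _.
rewrite [X in _ <= X](_ : _ = \sum_(i : I) c); last by rewrite sumr_const mulr_natr.
by rewrite [X in _ <= X](bigID J) /= lerDl sumr_ge0.
Qed.

Lemma fin_delta_min (I : finType) (P : I -> R -> Prop) :
  (forall i, exists2 d, 0 < d & P i d) ->
  (forall i d d', 0 < d' -> d' <= d -> P i d -> P i d') ->
  exists2 d, 0 < d & forall i, P i d.
Proof.
move=> exP Pdown.
have /choice[D HD] : forall i, exists d, 0 < d /\ P i d.
  by move=> i; have [d d0 Pd] := exP i; exists d.
have D0 : 0 < \big[Order.min/1]_i D i.
  by apply: (big_ind (fun x => 0 < x)) => // [x z|i _]; [rewrite lt_min => -> | case: (HD i)].
exists (\big[Order.min/1]_i D i) => // i.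
have [Di0 PDi] := HD i; apply: Pdown PDi => //.
by rewrite (bigD1 i) //= ge_min lexx.
Qed.

Lemma interpolate {L U N : R} : L <= N <= U ->
  exists2 th, 0 <= th <= 1 & L + th * (U - L) = N.
Proof.
move=> /andP[LN NU]; have [UL | UL] := eqVneq U L.
  by exists 0; rewrite ?lexx ?ler01 //; lra.
have ULp : 0 < U - L by rewrite lt_def subr_eq0 UL /=; lra.
exists ((N - L) / (U - L)); last by rewrite divfK ?gt_eqF //; ring.
by rewrite divr_ge0 ?ler_pdivrMr //=; lra.
Qed.

Lemma sqrt_le_tangent {x y : R} : 0 < x -> 0 <= y ->
  Num.sqrt y <= Num.sqrt x + (y - x) / (2 * Num.sqrt x).
Proof.
move=> x0 y0; have sx : 0 < Num.sqrt x by rewrite sqrtr_gt0.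
have ex := sqr_sqrtr (ltW x0); have ey := sqr_sqrtr y0.
set a := Num.sqrt x in sx ex *; set b := Num.sqrt y in ey *.
rewrite -ex -ey.
have -> : a + (b ^+ 2 - a ^+ 2) / (2 * a) = (a ^+ 2 + b ^+ 2) / (2 * a).
  by field; rewrite gt_eqF.
rewrite ler_pdivlMr ?mulr_gt0 //.
have := sqr_ge0 (a - b); rewrite !expr2; lra.
Qed.

End RealFacts.

Lemma hnorm_ge0 {R : realType} {X : Type} (ip : (X -> R) -> (X -> R) -> R) f :
  0 <= hnorm ip f.
Proof. exact: sqrtr_ge0. Qed.

Section RKHSAlgebra.
Context {R : realType} {X : Type} {k : X -> X -> R}.
Context {Hs : set (X -> R)} {ip : (X -> R) -> (X -> R) -> R}.
Hypothesis HR : is_RKHS k Hs ip.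

Local Notation hnorm := (hnorm ip).

Lemma rkhs_lincomb (a b : R) {f g} : Hs f -> Hs g -> Hs (fun x => a * f x + b * g x).
Proof. by move=> hf hg; apply: (rkhs_add HR); exact: (rkhs_scale HR). Qed.

Lemma rkhs_sub {f g} : Hs f -> Hs g -> Hs (fun x => f x - g x).
Proof.
move=> hf hg; have := rkhs_lincomb 1 (-1) hf hg.
by have -> : (fun x => 1 * f x + -1 * g x) = (fun x => f x - g x) by apply: funext => x; ring.
Qed.

Lemma ip0f {h} : Hs h -> ip (fun _ => 0) h = 0.
Proof.
move=> hh; have := rkhs_lin HR 1 (rkhs_zero HR) (rkhs_zero HR) hh.
have -> : (fun x : X => 1 * 0 + 0) = (fun=> 0 : R) by apply: funext => x; rewrite mul1r addr0.
lra.
Qed.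

Lemma ip_lincombl (a b : R) {f g h} : Hs f -> Hs g -> Hs h ->
  ip (fun x => a * f x + b * g x) h = a * ip f h + b * ip g h.
Proof.
move=> hf hg hh; rewrite (rkhs_lin HR) //; last exact: (rkhs_scale HR).
congr (_ + _).
have := rkhs_lin HR b hg (rkhs_zero HR) hh.
have -> : (fun x : X => b * g x + 0) = (fun x => b * g x) by apply: funext => x; rewrite addr0.
by rewrite ip0f // addr0.
Qed.

Lemma ip_lincombr (a b : R) {f g h} : Hs f -> Hs g -> Hs h ->
  ip h (fun x => a * f x + b * g x) = a * ip h f + b * ip h g.
Proof.
move=> hf hg hh; rewrite (rkhs_sym HR) ?ip_lincombl //; last exact: rkhs_lincomb.
by rewrite (rkhs_sym HR hf) // (rkhs_sym HR hg).
Qed.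

Lemma ip_lincomb_sqr (a b : R) {f g} : Hs f -> Hs g ->
  ip (fun x => a * f x + b * g x) (fun x => a * f x + b * g x)
  = a ^+ 2 * ip f f + 2 * a * b * ip f g + b ^+ 2 * ip g g.
Proof.
move=> hf hg; rewrite ip_lincombl //; last exact: rkhs_lincomb.
by rewrite !ip_lincombr // (rkhs_sym HR hg hf); ring.
Qed.

Lemma ipZl (c : R) {f h} : Hs f -> Hs h -> ip (fun x => c * f x) h = c * ip f h.
Proof.
move=> hf hh; have -> : (fun x => c * f x) = (fun x => c * f x + 0 * f x).
  by apply: funext => x; ring.
by rewrite ip_lincombl //; ring.
Qed.

Lemma ipZ_sqr (c : R) {f} : Hs f ->
  ip (fun x => c * f x) (fun x => c * f x) = c ^+ 2 * ip f f.
Proof.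
move=> hf; have -> : (fun x => c * f x) = (fun x => c * f x + 0 * f x).
  by apply: funext => x; ring.
by rewrite ip_lincomb_sqr //; ring.
Qed.

Lemma ipB_sqr {f g} : Hs f -> Hs g ->
  ip (fun x => f x - g x) (fun x => f x - g x) = ip f f - 2 * ip f g + ip g g.
Proof.
move=> hf hg; have -> : (fun x => f x - g x) = (fun x => 1 * f x + (-1) * g x).
  by apply: funext => x; ring.
by rewrite ip_lincomb_sqr //; ring.
Qed.

Lemma parallelogram {f g} : Hs f -> Hs g ->
  ip (fun x => f x - g x) (fun x => f x - g x)
  + 4 * ip (fun x => 2^-1 * f x + 2^-1 * g x) (fun x => 2^-1 * f x + 2^-1 * g x)
  = 2 * ip f f + 2 * ip g g.
Proof. by move=> hf hg; rewrite ipB_sqr // ip_lincomb_sqr //; field. Qed.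

Lemma hnorm_sqr {f} : Hs f -> hnorm f ^+ 2 = ip f f.
Proof. by move=> hf; rewrite /hnorm sqr_sqrtr // (rkhs_pos HR). Qed.

Lemma hnorm_le f (c : R) : 0 <= c -> ip f f <= c ^+ 2 -> hnorm f <= c.
Proof.
move=> c0 fc; rewrite /hnorm -(ger0_norm c0) -sqrtr_sqr ler_sqrt //.
exact: sqr_ge0.
Qed.

Lemma hnorm_lt f (c : R) : 0 < c -> ip f f < c ^+ 2 -> hnorm f < c.
Proof.
move=> c0 fc; rewrite /hnorm -(ger0_norm (ltW c0)) -sqrtr_sqr ltr_sqrt //.
exact: exprn_gt0.
Qed.

Lemma cauchy_schwarz_sqr {f g} : Hs f -> Hs g -> ip f g ^+ 2 <= ip f f * ip g g.
Proof.
move=> hf hg; have [g0 | g0] := eqVneq (ip g g) 0.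
  have -> : g = (fun _ => 0) by exact: (rkhs_def HR).
  have h0 := rkhs_zero HR.
  by rewrite (rkhs_sym HR hf h0) !ip0f // expr2 !mulr0.
have gp : 0 < ip g g by rewrite lt0r g0 (rkhs_pos HR).
have := rkhs_pos HR (rkhs_lincomb 1 (- (ip f g / ip g g)) hf hg).
rewrite ip_lincomb_sqr //.
have -> : 1 ^+ 2 * ip f f + 2 * 1 * - (ip f g / ip g g) * ip f g
    + (- (ip f g / ip g g)) ^+ 2 * ip g g = ip f f - ip f g ^+ 2 / ip g g.
  by field; rewrite gt_eqF.
by rewrite subr_ge0 ler_pdivrMr.
Qed.

Lemma cauchy_schwarz {f g} : Hs f -> Hs g -> `|ip f g| <= hnorm f * hnorm g.
Proof.
move=> hf hg; rewrite -sqrtr_sqr /hnorm -sqrtrM ?(rkhs_pos HR) //.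
by rewrite ler_sqrt ?cauchy_schwarz_sqr // mulr_ge0 ?(rkhs_pos HR).
Qed.

Lemma ip_le_hnorm {f g} : Hs f -> Hs g -> ip f g <= hnorm f * hnorm g.
Proof. by move=> hf hg; apply: le_trans (ler_norm _) (cauchy_schwarz hf hg). Qed.

Lemma hnormB_le {f g} : Hs f -> Hs g -> hnorm (fun x => f x - g x) <= hnorm f + hnorm g.
Proof.
move=> hf hg; apply: hnorm_le; first by rewrite addr_ge0 ?hnorm_ge0.
rewrite ipB_sqr // -(hnorm_sqr hf) -(hnorm_sqr hg).
have := cauchy_schwarz hf hg; rewrite ler_norml => /andP[cs _]; lra.
Qed.

Lemma rkhs_sum (I : Type) (r : seq I) (P : pred I) (c : I -> R) (g : I -> X -> R) :
  (forall i, Hs (g i)) -> Hs (fun x => \sum_(i <- r | P i) c i * g i x).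
Proof.
move=> hg; elim: r => [|i r IH].
  have -> : (fun x => \sum_(i <- [::] | P i) c i * g i x) = (fun _ => 0).
    by apply: funext => x; rewrite big_nil.
  exact: (rkhs_zero HR).
have -> : (fun x => \sum_(j <- i :: r | P j) c j * g j x) =
    (fun x => (P i)%:R * c i * g i x + 1 * \sum_(j <- r | P j) c j * g j x).
  by apply: funext => x; rewrite big_cons mul1r; case: (P i); rewrite ?mul1r ?mul0r ?add0r.
exact: rkhs_lincomb.
Qed.

Lemma ip_sumr (I : Type) (r : seq I) (P : pred I) (c : I -> R) (g : I -> X -> R) h :
  (forall i, Hs (g i)) -> Hs h ->
  ip h (fun x => \sum_(i <- r | P i) c i * g i x) = \sum_(i <- r | P i) c i * ip h (g i).
Proof.
move=> hg hh; elim: r => [|i r IH].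
  have -> : (fun x => \sum_(i <- [::] | P i) c i * g i x) = (fun _ => 0).
    by apply: funext => x; rewrite big_nil.
  by rewrite big_nil (rkhs_sym HR hh (rkhs_zero HR)) ip0f //; exact: (rkhs_zero HR).
have -> : (fun x => \sum_(j <- i :: r | P j) c j * g j x) =
    (fun x => (P i)%:R * c i * g i x + 1 * \sum_(j <- r | P j) c j * g j x).
  by apply: funext => x; rewrite big_cons mul1r; case: (P i); rewrite ?mul1r ?mul0r ?add0r.
rewrite ip_lincombr //; last exact: rkhs_sum.
rewrite IH big_cons mul1r.
by case: (P i); rewrite ?mul1r ?mul0r ?add0r.
Qed.

Lemma hnorm_le_limit {u : nat -> X -> R} {f} {c : R} : Hs f -> (forall n, Hs (u n)) ->
  (forall n, hnorm (u n) <= c) ->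
  (forall e : R, 0 < e -> exists N, forall n, (N <= n)%N -> hnorm (fun x => u n x - f x) < e) ->
  hnorm f <= c.
Proof.
move=> hf hu uc cvg; apply/ler_addgt0Pr => e e0.
have [N /(_ N (leqnn N)) uNf] := cvg e e0.
have -> : f = (fun x => u N x - (u N x - f x)) by apply: funext => x; ring.
apply: le_trans (hnormB_le (hu N) (rkhs_sub (hu N) hf)) _.
by have := uc N; lra.
Qed.

End RKHSAlgebra.

Section ConvexLoss.
Variables (R : realType) (l : R -> R).
Hypothesis l_convex : convex_fun l.
Hypothesis l_mono : {homo l : a b / a <= b}.
Hypothesis l_ge0 : forall z, 0 <= l z.
Hypothesis l_subgrad_unbounded : forall M : R, 0 < M ->
  exists z0 : R, forall z g : R, z0 <= z -> subgrad l z g -> M <= g.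

Lemma convex_three_slopes (a b c : R) : a < b -> b < c ->
  (c - a) * l b <= (c - b) * l a + (b - a) * l c.
Proof.
move=> ab bc; set t := (c - b) / (c - a).
have t0 : 0 <= t by apply: divr_ge0; lra.
have t1 : t <= 1 by rewrite ler_pdivrMr; lra.
have := l_convex a c t t0 t1.
have -> : t * a + (1 - t) * c = b by rewrite /t; field; lra.
have -> : (c - b) * l a + (b - a) * l c = (c - a) * (t * l a + (1 - t) * l c).
  by rewrite /t; field; lra.
by move=> lb; rewrite ler_pM2l //; lra.
Qed.

Definition rslope (z h : R) := (l (z + h) - l z) / h.
Definition lslope (z h : R) := (l z - l (z - h)) / h.

Lemma lslope_le_rslope (z h h' : R) : 0 < h -> 0 < h' -> lslope z h <= rslope z h'.
Proof.
move=> h0 h'0; apply: ler_pdiv_cross => //.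
have := convex_three_slopes (z - h) z (z + h'); lra.
Qed.

Definition rslopes z := [set rslope z h | h in [set h : R | 0 < h]].
Definition lslopes z := [set lslope z h | h in [set h : R | 0 < h]].

Definition rderiv z := inf (rslopes z).
Definition lderiv z := sup (lslopes z).

Lemma rslopes_has_inf z : has_inf (rslopes z).
Proof.
split; first by exists (rslope z 1), 1 => //=; exact: ltr01.
by exists (lslope z 1) => _ [h h0 <-]; exact: lslope_le_rslope.
Qed.

Lemma lslopes_has_sup z : has_sup (lslopes z).
Proof.
split; first by exists (lslope z 1), 1 => //=; exact: ltr01.
by exists (rslope z 1) => _ [h h0 <-]; exact: lslope_le_rslope.
Qed.

Lemma rderiv_le_rslope z {h} : 0 < h -> rderiv z <= rslope z h.
Proof. by move=> h0; apply: (ge_inf (rslopes_has_inf z).2); exists h. Qed.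

Lemma lslope_le_lderiv z {h} : 0 < h -> lslope z h <= lderiv z.
Proof. by move=> h0; apply: (sup_upper_bound (lslopes_has_sup z)); exists h. Qed.

Lemma lslope_le_rderiv z {h} : 0 < h -> lslope z h <= rderiv z.
Proof.
move=> h0; apply: lb_le_inf; first exact: (rslopes_has_inf z).1.
by move=> _ [h' h'0 <-]; exact: lslope_le_rslope.
Qed.

Lemma lderiv_le_rderiv z : lderiv z <= rderiv z.
Proof.
apply: ge_sup; first exact: (lslopes_has_sup z).1.
by move=> _ [h h0 <-]; exact: lslope_le_rderiv.
Qed.

Lemma rderiv_le_lderiv {z z'} : z < z' -> rderiv z <= lderiv z'.
Proof.
move=> zz'; have h0 : 0 < z' - z by lra.
apply: le_trans (rderiv_le_rslope z h0) _; apply: le_trans _ (lslope_le_lderiv z' h0).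
rewrite /rslope /lslope; have -> : z + (z' - z) = z' by ring.
by have -> : z' - (z' - z) = z by ring.
Qed.

Lemma rderiv_mono : {homo rderiv : z z' / z <= z'}.
Proof.
move=> z z'; rewrite le_eqVlt => /predU1P[-> // | zz'].
exact: le_trans (rderiv_le_lderiv zz') (lderiv_le_rderiv z').
Qed.

Lemma subgrad_deriv {z g} : lderiv z <= g -> g <= rderiv z -> subgrad l z g.
Proof.
move=> lg gr w; have [wz|zw|->] := ltgtP w z; last by rewrite subrr mulr0 addr0.
- have h0 : 0 < z - w by lra.
  have := le_trans (lslope_le_lderiv z h0) lg.
  rewrite /lslope (_ : z - (z - w) = w) ?ler_pdivrMr //; [nra | ring].
- have h0 : 0 < w - z by lra.
  have := le_trans gr (rderiv_le_rslope z h0).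
  rewrite /rslope (_ : z + (w - z) = w) ?ler_pdivlMr //; [nra | ring].
Qed.

Lemma rderiv_ge0 z : 0 <= rderiv z.
Proof.
apply: lb_le_inf; first exact: (rslopes_has_inf z).1.
move=> _ [h /= h0 <-]; rewrite /rslope divr_ge0 ?subr_ge0 ?l_mono //; lra.
Qed.

Lemma lderiv_ge0 z : 0 <= lderiv z.
Proof.
apply: le_trans (lslope_le_lderiv z ltr01) => //.
rewrite /lslope divr_ge0 ?subr_ge0 ?l_mono //; lra.
Qed.

Lemma rderiv_le_neg {z} : z < 0 -> rderiv z <= l 0 / - z.
Proof.
move=> z0; have h0 : 0 < - z by lra.
apply: le_trans (rderiv_le_rslope z h0) _.
rewrite /rslope (_ : z + - z = 0); last by ring.
by apply: ler_pdiv_cross => //; have := l_ge0 z; nra.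
Qed.

Lemma rderiv_unbounded {M} : 0 < M -> exists z0, forall z, z0 <= z -> M <= rderiv z.
Proof.
move=> M0; have [z0 Hz0] := l_subgrad_unbounded _ M0; exists z0 => z zz0.
exact/(Hz0 _ _ zz0)/subgrad_deriv/lexx/lderiv_le_rderiv.
Qed.

(* Halving the step of a near-optimal slope:
   [rslope (z + h/2) (h/2) = 2 rslope z h - rslope z (h/2)]. *)
Lemma rderiv_right_usc z {e} : 0 < e ->
  exists2 d, 0 < d & rderiv (z + d) <= rderiv z + e.
Proof.
move=> e0; have e2 : 0 < e / 2 by lra.
have [_ [h /= h0 <-] hnear] := inf_adherent e2 (rslopes_has_inf z).
have h2 : 0 < h / 2 by apply: divr_gt0.
exists (h / 2) => //; apply: le_trans (rderiv_le_rslope (z + h / 2) h2) _.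
have := rderiv_le_rslope z h2; move: hnear; rewrite /rslope.
have -> : z + h / 2 + h / 2 = z + h by field.
have -> : (l (z + h) - l (z + h / 2)) / (h / 2)
  = 2 * ((l (z + h) - l z) / h) - (l (z + h / 2) - l z) / (h / 2) by field; lra.
rewrite -/(rderiv z); lra.
Qed.

Lemma lderiv_approx_left z {e} : 0 < e ->
  exists2 d, 0 < d & lderiv z - e <= rderiv (z - d).
Proof.
move=> e0; have e2 : 0 < e / 2 by lra.
have [_ [h /= h0 <-] hnear] := sup_adherent e2 (lslopes_has_sup z).
have h2 : 0 < h / 2 by apply: divr_gt0.
exists (h / 2) => //; apply: le_trans _ (lslope_le_rderiv (z - h / 2) h2).
have := lslope_le_lderiv z h2; move: hnear; rewrite /lslope.
have -> : z - h / 2 - h / 2 = z - h by field.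
have -> : (l (z - h / 2) - l (z - h)) / (h / 2)
  = 2 * ((l z - l (z - h)) / h) - (l z - l (z - h / 2)) / (h / 2) by field; lra.
rewrite -/(lderiv z); lra.
Qed.

(* The convex conjugate of [l] as a real number; for [x < 0] the supremum may be infinite and
   [lconj x] is then a junk value. *)
Definition lconj (x : R) := sup [set x * z - l z | z in [set: R]].

Lemma lconj_has_sup {x} : 0 <= x -> has_sup [set x * z - l z | z in [set: R]].
Proof.
move=> x0; split; first by exists (x * 0 - l 0), 0.
have x1 : 0 < x + 1 by lra.
have [z0 Hz0] := rderiv_unbounded x1; have := Hz0 z0 (lexx z0) => xz0.
have sg := subgrad_deriv (lderiv_le_rderiv z0) (lexx (rderiv z0)).
exists (x * z0) => _ [z _ <-]; have := l_ge0 z; have := l_ge0 z0.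
have [z0z|zz0] := leP z0 z; last by nra.
have := sg z; have := rderiv_ge0 z0; nra.
Qed.

Lemma fenchel_young {x} z : 0 <= x -> x * z <= l z + lconj x.
Proof.
move=> x0; suff : x * z - l z <= lconj x by lra.
by apply: (sup_upper_bound (lconj_has_sup x0)); exists z.
Qed.

Lemma lconj_le x c : (forall z, x * z - l z <= c) -> lconj x <= c.
Proof.
move=> H; apply: ge_sup; first by exists (x * 0 - l 0), 0.
by move=> _ [z _ <-]; exact: H.
Qed.

Lemma lconj_deriv {z g} : lderiv z <= g -> g <= rderiv z -> lconj g = g * z - l z.
Proof.
move=> lg gr; have g0 := le_trans (lderiv_ge0 z) lg.
apply/eqP; rewrite eq_le; apply/andP; split; last by have := fenchel_young z g0; lra.
by apply: lconj_le => w; have := subgrad_deriv lg gr w; lra.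
Qed.

Lemma lconj_convex a b t : 0 <= a -> 0 <= b -> 0 <= t -> t <= 1 ->
  lconj ((1 - t) * a + t * b) <= (1 - t) * lconj a + t * lconj b.
Proof.
move=> a0 b0 t0 t1; have t0' : 0 <= 1 - t by lra.
apply: lconj_le => z.
have := ler_wpM2l t0' (fenchel_young z a0); have := ler_wpM2l t0 (fenchel_young z b0).
lra.
Qed.

Lemma fconj_lconj x : 0 <= x -> fconj l x = (lconj x)%:E.
Proof.
move=> x0; rewrite /fconj /lconj.
have -> : [set (x * z - l z)%:E | z in [set: R]] = EFin @` [set x * z - l z | z in [set: R]].
  by rewrite image_comp.
by rewrite ereal_sup_EFin //; case: (lconj_has_sup x0).
Qed.

Section SubgradientSelection.
Variables (I : finType) (J : pred I) (a : I -> R).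

Definition sum_rderiv s := \sum_(i | J i) rderiv (s + a i).
Definition sum_lderiv s := \sum_(i | J i) lderiv (s + a i).

Lemma sum_rderiv_mono : {homo sum_rderiv : s s' / s <= s'}.
Proof. by move=> s s' ss'; apply: ler_sum => i _; apply: rderiv_mono; lra. Qed.

Lemma card_share_le {e : R} : 0 < e -> e / (#|I|%:R + 1) * #|I|%:R <= e.
Proof.
have n0 : (0 : R) <= #|I|%:R := ler0n _ _.
by move=> e0; rewrite mulrAC ler_pdivrMr; nra.
Qed.

Lemma sum_rderiv_right_usc s {e} : 0 < e ->
  exists2 d, 0 < d & sum_rderiv (s + d) <= sum_rderiv s + e.
Proof.
move=> e0; set e' := e / (#|I|%:R + 1).
have e'0 : 0 < e' by apply: divr_gt0; rewrite ?ltr_pwDr ?ler0n.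
have [d d0 Hd] : exists2 d, 0 < d & forall i, rderiv (s + d + a i) <= rderiv (s + a i) + e'.
  apply: fin_delta_min => [i | i d d' d'0 d'd].
    by have [d d0 Hd] := rderiv_right_usc (s + a i) e'0; exists d; rewrite // addrAC.
  by apply: le_trans; apply: rderiv_mono; lra.
exists d => //; apply: le_trans (ler_sum _ (fun i _ => Hd i)) _.
rewrite big_split lerD2l /=.
exact: le_trans (sum_le_card J (fun=> e') (ltW e'0) (fun _ _ => lexx e')) (card_share_le e0).
Qed.

Lemma sum_lderiv_approx_left s {e} : 0 < e ->
  exists2 d, 0 < d & sum_lderiv s - e <= sum_rderiv (s - d).
Proof.
move=> e0; set e' := e / (#|I|%:R + 1).
have e'0 : 0 < e' by apply: divr_gt0; rewrite ?ltr_pwDr ?ler0n.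
have [d d0 Hd] : exists2 d, 0 < d & forall i, lderiv (s + a i) - e' <= rderiv (s - d + a i).
  apply: fin_delta_min => [i | i d d' d'0 d'd].
    by have [d d0 Hd] := lderiv_approx_left (s + a i) e'0; exists d; rewrite // addrAC.
  by move=> h; apply: le_trans h _; apply: rderiv_mono; lra.
exists d => //; apply: le_trans _ (ler_sum _ (fun i _ => Hd i)).
rewrite sumrB /sum_lderiv lerD2l lerN2.
exact: le_trans (sum_le_card J (fun=> e') (ltW e'0) (fun _ _ => lexx e')) (card_share_le e0).
Qed.

Lemma sum_rderiv_small {N} : 0 < N -> exists s, sum_rderiv s < N.
Proof.
move=> N0; set A := \sum_i `|a i|; set C := #|I|%:R * l 0.
have C0 : 0 <= C by rewrite mulr_ge0 ?ler0n.
set T := C / N + 1; have T0 : 0 < T by rewrite ltr_pwDr ?divr_ge0 //; lra.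
exists (- A - T); apply: (le_lt_trans (y := l 0 / T * #|I|%:R)).
  apply: sum_le_card => [|i _]; first by rewrite divr_ge0 //; lra.
  have aA : `|a i| <= A by rewrite /A (bigD1 i) //= lerDl sumr_ge0.
  have neg : - A - T + a i < 0 by have := ler_norm (a i); lra.
  apply: le_trans (rderiv_le_neg neg) _; apply: ler_pdiv_cross => //; first lra.
  have := ler_norm (a i); have := l_ge0 0; nra.
have -> : l 0 / T * #|I|%:R = C / T by rewrite /C; field; lra.
by rewrite ltr_pdivrMr // /T mulrDr mulr1 mulrC divfK ?gt_eqF //; lra.
Qed.

Lemma sum_rderiv_large {N} : 0 < N -> (exists i, J i) ->
  exists z, forall s, z <= s -> N <= sum_rderiv s.
Proof.
move=> N0 [i0 Ji0]; have [z0 Hz0] := rderiv_unbounded N0.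
exists (z0 - a i0) => s zs; rewrite /sum_rderiv (bigD1 i0) //=.
have : 0 <= \sum_(i | J i && (i != i0)) rderiv (s + a i).
  by apply: sumr_ge0 => i _; exact: rderiv_ge0.
have : N <= rderiv (s + a i0) by apply: Hz0; lra.
lra.
Qed.

Lemma sum_deriv_bracket {N} : 0 < N -> (exists i, J i) ->
  exists s, sum_lderiv s <= N <= sum_rderiv s.
Proof.
move=> N0 J0; pose T := [set s | sum_rderiv s < N].
have [s0 Ts0] := sum_rderiv_small N0.
have [z Hz] := sum_rderiv_large N0 J0.
have hT : has_sup T.
  split; first by exists s0.
  exists z => s Ts; rewrite leNgt; apply/negP => /ltW /Hz.
  by move: Ts; rewrite /T /=; lra.
exists (sup T); apply/andP; split; rewrite leNgt; apply/negP => Nlt.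
- have e0 : 0 < sum_lderiv (sup T) - N by lra.
  have [d d0 Hd] := sum_lderiv_approx_left (sup T) e0.
  have [s' Ts' Hs'] := sup_adherent d0 hT.
  have := sum_rderiv_mono _ _ (ltW Hs'); move: Ts' Hd; rewrite /T /=; lra.
- have e0 : 0 < (N - sum_rderiv (sup T)) / 2 by lra.
  have [d d0 Hd] := sum_rderiv_right_usc (sup T) e0.
  have : T (sup T + d) by rewrite /T /=; lra.
  by move/(sup_upper_bound hT); lra.
Qed.

Lemma exists_subgrads_with_sum {N} : 0 < N -> (exists i, J i) ->
  exists s (g : I -> R), (forall i, J i -> lderiv (s + a i) <= g i <= rderiv (s + a i))
    /\ \sum_(i | J i) g i = N.
Proof.
move=> N0 J0; have [s bracket] := sum_deriv_bracket N0 J0.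
have [th /andP[th0 th1] thN] := interpolate bracket.
exists s, (fun i => lderiv (s + a i) + th * (rderiv (s + a i) - lderiv (s + a i))); split.
  by move=> i _; have := lderiv_le_rderiv (s + a i) => lr; apply/andP; split; nra.
rewrite big_split /= -mulr_sumr sumrB; exact: thN.
Qed.

End SubgradientSelection.

Section Duality.
Variables (X : Type) (k : X -> X -> R) (Hs : set (X -> R)).
Variables (ip : (X -> R) -> (X -> R) -> R).
Variables (m1 : nat) (xs : 'I_m1 -> X) (ys : 'I_m1 -> R) (lambda : R).
Hypothesis HR : is_RKHS k Hs ip.
Hypothesis ys_sign : forall i, ys i = 1 \/ ys i = -1.
Hypothesis ys_pos : exists i, ys i = 1.
Hypothesis ys_neg : exists i, ys i = -1.
Hypothesis lambda_gt0 : 0 < lambda.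

Local Notation hnorm := (hnorm ip).
Local Notation mR := (m1%:R : R).
Local Notation primal_obj := (primal_obj l xs ys).

Lemma mR_gt0 : 0 < mR.
Proof. by case: ys_pos => i _; rewrite ltr0n; apply: leq_ltn_trans (ltn_ord i). Qed.

Lemma eq_1_N1 : ((1 : R) == -1) = false.
Proof. by apply/eqP; lra. Qed.

Lemma eq_N1_1 : ((-1 : R) == 1) = false.
Proof. by apply/eqP; lra. Qed.

Lemma sum_by_class (F : 'I_m1 -> R) :
  \sum_i F i = \sum_(i | ys i == 1) F i + \sum_(i | ys i == -1) F i.
Proof.
rewrite (bigID (fun i => ys i == 1)) /=; congr (_ + _); apply: eq_bigl => i.
by case: (ys_sign i) => ->; rewrite ?eqxx ?eq_1_N1 ?eq_N1_1.
Qed.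

Lemma balanced_class_sums {G : 'I_m1 -> R} {c : R} :
  \sum_(i | ys i == 1) G i = c -> \sum_(i | ys i == -1) G i = c ->
  \sum_i G i = 2 * c /\ \sum_i G i * ys i = 0.
Proof.
move=> Gp Gn; split; first by rewrite sum_by_class Gp Gn; ring.
rewrite sum_by_class (eq_bigr G); last by move=> i /eqP ->; rewrite mulr1.
rewrite [X in _ + X](eq_bigr (fun i => - G i)); last by move=> i /eqP ->; rewrite mulrN1.
by rewrite sumrN Gp Gn subrr.
Qed.

Definition dual_feasible (a : 'I_m1 -> R) : Prop :=
  [/\ forall i, 0 <= a i, \sum_(i | ys i == 1) a i = 1 & \sum_(i | ys i == -1) a i = 1].

Lemma dual_feasible_le1 {a} i : dual_feasible a -> a i <= 1.
Proof.
case=> a0 a1 a2; case: (ys_sign i) => yi.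
  by rewrite -a1 (bigD1 i) /= ?yi ?eqxx // lerDl sumr_ge0.
by rewrite -a2 (bigD1 i) /= ?yi ?eqxx // lerDl sumr_ge0.
Qed.

Lemma dual_feasible_exists : exists a, dual_feasible a.
Proof.
case: ys_pos => ip0 hp0; case: ys_neg => in0 hn0.
have neq : ip0 != in0 by apply/eqP => e; move: hp0; rewrite e hn0; lra.
exists (fun i => if i == ip0 then 1 else if i == in0 then 1 else 0); split.
- by move=> i; case: ifP => _ //; case: ifP.
- rewrite (bigD1 ip0) /= ?hp0 ?eqxx // big1 ?addr0 // => i /andP [yi ni].
  by rewrite (negbTE ni); case: ifP => // /eqP e; move: yi; rewrite e hn0 eq_N1_1.
- rewrite (bigD1 in0) /= ?hn0 ?eqxx // eq_sym (negbTE neq) big1 ?addr0 // => i /andP [yi ni].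
  by rewrite (negbTE ni); case: ifP => // /eqP e; move: yi; rewrite e hp0 eq_1_N1.
Qed.

Lemma dual_feasible_convex {a b t} : dual_feasible a -> dual_feasible b ->
  0 <= t -> t <= 1 -> dual_feasible (fun i => (1 - t) * a i + t * b i).
Proof.
case=> a0 a1 a2 [b0 b1 b2] t0 t1; split.
- by move=> i; apply: addr_ge0; apply: mulr_ge0 => //; lra.
- by rewrite big_split /= -!mulr_sumr a1 b1; ring.
- by rewrite big_split /= -!mulr_sumr a2 b2; ring.
Qed.

Lemma dual_feasible_signed_le1 a i : dual_feasible a -> `|a i * ys i| <= 1.
Proof.
move=> fa; case: (fa) => a0 _ _; rewrite normrM ger0_norm //.
by case: (ys_sign i) => ->; rewrite ?normrN normr1 mulr1; exact: dual_feasible_le1.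
Qed.

Lemma dual_feasible_signed_diff_le1 a b i : dual_feasible a -> dual_feasible b ->
  `|(b i - a i) * ys i| <= 1.
Proof.
move=> fa fb; have := dual_feasible_le1 i fa; have := dual_feasible_le1 i fb.
case: fa fb => a0 _ _ [b0 _ _]; have := a0 i; have := b0 i.
rewrite normrM; case: (ys_sign i) => ->;
  by rewrite ?normrN normr1 mulr1 ler_norml => *; apply/andP; split; lra.
Qed.

Definition conj_cost (a : 'I_m1 -> R) := mR^-1 * \sum_i lconj (mR * a i).

Lemma conj_cost_convex {a b t} : dual_feasible a -> dual_feasible b -> 0 <= t -> t <= 1 ->
  conj_cost (fun i => (1 - t) * a i + t * b i) <= (1 - t) * conj_cost a + t * conj_cost b.
Proof.
case=> a0 _ _ [b0 _ _] t0 t1; have m0 := mR_gt0.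
have -> : (1 - t) * conj_cost a + t * conj_cost b
  = mR^-1 * \sum_i ((1 - t) * lconj (mR * a i) + t * lconj (mR * b i)).
  by rewrite /conj_cost big_split /= -!mulr_sumr; ring.
apply: ler_wpM2l; first by rewrite invr_ge0 ltW.
apply: ler_sum => i _.
have -> : mR * ((1 - t) * a i + t * b i) = (1 - t) * (mR * a i) + t * (mR * b i) by ring.
by apply: lconj_convex => //; apply: mulr_ge0 => //; exact: ltW.
Qed.

Definition kexp (c : 'I_m1 -> R) : X -> R := fun x => \sum_i c i * k x (xs i).
Definition signed_kexp (a : 'I_m1 -> R) := kexp (fun i => a i * ys i).
Definition kexp_bound := \sum_i hnorm (fun x => k x (xs i)).

Definition lagrangian (f : X -> R) (a : 'I_m1 -> R) :=
  - \sum_i a i * ys i * f (xs i) - conj_cost a.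
Definition dual_obj (a : 'I_m1 -> R) := - (lambda * hnorm (signed_kexp a)) - conj_cost a.

Lemma rkhs_kexp c : Hs (kexp c).
Proof. by apply: (rkhs_sum HR) => i; exact: (rkhs_kernel_in HR). Qed.

Lemma ip_kexp {f} c : Hs f -> ip f (kexp c) = \sum_i c i * f (xs i).
Proof.
move=> hf; rewrite /kexp (ip_sumr HR) //; last by move=> i; exact: (rkhs_kernel_in HR).
by apply: eq_bigr => i _; rewrite -(rkhs_reproducing HR).
Qed.

Lemma kexp_bound_ge0 : 0 <= kexp_bound.
Proof. by apply: sumr_ge0 => i _; exact: hnorm_ge0. Qed.

Lemma hnorm_kexp_le c : (forall i, `|c i| <= 1) -> hnorm (kexp c) <= kexp_bound.
Proof.
move=> c1; have hw := rkhs_kexp c; set w := kexp c.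
suff : ip w w <= hnorm w * kexp_bound.
  by have := hnorm_sqr HR hw; have := hnorm_ge0 ip w; have := kexp_bound_ge0; nra.
rewrite {1}/w ip_kexp // /kexp_bound mulr_sumr; apply: ler_sum => i _.
have hk := rkhs_kernel_in HR (xs i).
rewrite (rkhs_reproducing HR (xs i) hw); apply: le_trans (ler_norm _) _.
rewrite normrM; have := cauchy_schwarz HR hw hk.
have := normr_ge0 (ip w (fun x => k x (xs i))); have := c1 i.
have := hnorm_ge0 ip w; have := hnorm_ge0 ip (fun x => k x (xs i)); nra.
Qed.

Lemma signed_kexp_mix a b t : signed_kexp (fun i => (1 - t) * a i + t * b i) =
  (fun x => 1 * signed_kexp a x + t * kexp (fun i => (b i - a i) * ys i) x).
Proof.
apply: funext => x; rewrite /signed_kexp /kexp mul1r mulr_sumr -big_split /=.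
by apply: eq_bigr => i _; ring.
Qed.

Lemma lagrangian_le_primal f b rho {a} : dual_feasible a -> lagrangian f a <= primal_obj f b rho.
Proof.
move=> fa; case: (fa) => a0 a1 a2; have m0 := mR_gt0.
have [s1 s2] := balanced_class_sums a1 a2.
set u := fun i => rho - ys i * (f (xs i) + b).
set S := \sum_i a i * ys i * f (xs i).
have E : \sum_i mR * a i * u i = mR * (rho * \sum_i a i - S - b * \sum_i a i * ys i).
  rewrite [rho * _]mulr_sumr [b * _]mulr_sumr -!sumrB mulr_sumr.
  by apply: eq_bigr => i _; rewrite /u; ring.
have FY : \sum_i mR * a i * u i <= \sum_i l (u i) + \sum_i lconj (mR * a i).
  rewrite -big_split; apply: ler_sum => i _.
  by apply: fenchel_young; apply: mulr_ge0 (ltW m0) (a0 i).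
rewrite E s1 s2 in FY; rewrite /lagrangian /conj_cost /primal_obj -/u -/S.
have mi : 0 <= mR^-1 by rewrite invr_ge0 ltW.
have := ler_wpM2l mi FY.
rewrite (mulrA mR^-1 mR) mulVf ?gt_eqF // mul1r mulrDr; lra.
Qed.

Lemma dual_le_lagrangian {f a} : Hs f -> ip f f <= lambda ^+ 2 -> dual_feasible a ->
  dual_obj a <= lagrangian f a.
Proof.
move=> hf flam fa; rewrite /dual_obj /lagrangian lerD2r lerN2.
rewrite -(ip_kexp _ hf); apply: le_trans (ip_le_hnorm HR hf (rkhs_kexp _)) _.
by rewrite ler_wpM2r ?hnorm_ge0 // (hnorm_le _ _ (ltW lambda_gt0)).
Qed.

Lemma lagrangian_shift {f g} a : Hs f -> Hs g ->
  lagrangian f a = lagrangian g a + ip (fun x => g x - f x) (signed_kexp a).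
Proof.
move=> hf hg; rewrite /lagrangian /signed_kexp ip_kexp; last exact: (rkhs_sub HR).
have -> : \sum_i a i * ys i * (g (xs i) - f (xs i)) =
  \sum_i a i * ys i * g (xs i) - \sum_i a i * ys i * f (xs i).
  by rewrite -sumrB; apply: eq_bigr => i _; ring.
ring.
Qed.

Lemma primal_eq_lagrangian_subgrads f b rho (G : 'I_m1 -> R) :
  (forall i, lderiv (rho - ys i * (f (xs i) + b)) <= G i
               <= rderiv (rho - ys i * (f (xs i) + b))) ->
  \sum_(i | ys i == 1) G i = mR -> \sum_(i | ys i == -1) G i = mR ->
  dual_feasible (fun i => G i / mR) /\ primal_obj f b rho = lagrangian f (fun i => G i / mR).
Proof.
move=> HG Gp Gn; have m0 := mR_gt0; have [s1 s2] := balanced_class_sums Gp Gn.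
split.
  split.
  - move=> i; have /andP[lg _] := HG i.
    by rewrite divr_ge0 ?(ltW m0) // (le_trans (lderiv_ge0 _) lg).
  - by rewrite -mulr_suml Gp divff // gt_eqF.
  - by rewrite -mulr_suml Gn divff // gt_eqF.
set u := fun i => rho - ys i * (f (xs i) + b).
have Hl i : l (u i) = G i * u i - lconj (G i).
  by have /andP[lg gr] := HG i; rewrite /u (lconj_deriv lg gr); ring.
rewrite /primal_obj /lagrangian /conj_cost -/u (eq_bigr _ (fun i _ => Hl i)) sumrB.
have -> : \sum_i lconj (mR * (G i / mR)) = \sum_i lconj (G i).
  by apply: eq_bigr => i _; rewrite mulrC divfK // gt_eqF.
have -> : \sum_i G i * u i =
    rho * \sum_i G i - \sum_i G i * ys i * f (xs i) - b * \sum_i G i * ys i.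
  rewrite [rho * _]mulr_sumr [b * _]mulr_sumr -!sumrB.
  by apply: eq_bigr => i _; rewrite /u; ring.
have -> : \sum_i G i / mR * ys i * f (xs i) = mR^-1 * \sum_i G i * ys i * f (xs i).
  by rewrite mulr_sumr; apply: eq_bigr => i _; ring.
by rewrite s1 s2; field; rewrite gt_eqF.
Qed.

(* Minimizing over [b] and [rho] first: both classes get the same total subgradient mass [m1]. *)
Lemma primal_attains_lagrangian f :
  exists b rho a, dual_feasible a /\ primal_obj f b rho = lagrangian f a.
Proof.
have hP : exists i, (fun i => ys i == 1) i by case: ys_pos => i hi; exists i; rewrite /= hi.
have hN : exists i, (fun i => ys i == -1) i by case: ys_neg => i hi; exists i; rewrite /= hi.
have [s [g [Hg Sg]]] := exists_subgrads_with_sum _ _ (fun i => - f (xs i)) mR_gt0 hP.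
have [t [g' [Hg' Sg']]] := exists_subgrads_with_sum _ _ (fun i => f (xs i)) mR_gt0 hN.
pose G i := if ys i == 1 then g i else g' i.
exists ((t - s) / 2), ((s + t) / 2), (fun i => G i / mR).
apply: primal_eq_lagrangian_subgrads => [i | |].
- rewrite /G; case: (ys_sign i) => yi; rewrite yi ?eqxx ?eq_N1_1.
    have -> : (s + t) / 2 - 1 * (f (xs i) + (t - s) / 2) = s + - f (xs i) by field.
    by apply: Hg; rewrite /= yi.
  have -> : (s + t) / 2 - -1 * (f (xs i) + (t - s) / 2) = t + f (xs i) by field.
  by apply: Hg'; rewrite /= yi.
- by rewrite -Sg; apply: eq_bigr => i /eqP yi; rewrite /G yi eqxx.
- by rewrite -Sg'; apply: eq_bigr => i /eqP yi; rewrite /G yi eq_N1_1.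
Qed.

Definition primal_values := [set r | exists f b rho,
  [/\ Hs f, ip f f <= lambda ^+ 2 & r = primal_obj f b rho]].

Lemma primal_values_has_inf : has_inf primal_values.
Proof.
split.
  exists (primal_obj (fun _ => 0) 0 0), (fun _ => 0), 0, 0; split => //.
    exact: (rkhs_zero HR).
  by rewrite (ip0f HR (rkhs_zero HR)) sqr_ge0.
have [a fa] := dual_feasible_exists.
exists (dual_obj a) => _ [f [b [rho [hf flam ->]]]].
exact: le_trans (dual_le_lagrangian hf flam fa) (lagrangian_le_primal _ _ _ fa).
Qed.

Definition primal_inf := inf primal_values.

Lemma primal_inf_le {f} b rho : Hs f -> ip f f <= lambda ^+ 2 -> primal_inf <= primal_obj f b rho.
Proof. by move=> hf flam; apply: (ge_inf primal_values_has_inf.2); exists f, b, rho. Qed.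

Definition near_optimal (e : R) := [set f | [/\ Hs f, ip f f <= lambda ^+ 2 &
  exists b rho, primal_obj f b rho <= primal_inf + e]].

Lemma near_optimal_nonempty {e} : 0 < e -> exists f, near_optimal e f.
Proof.
move=> e0; have [_ [f [b [rho [hf flam ->]]]] close] := inf_adherent e0 primal_values_has_inf.
by exists f; split => //; exists b, rho; apply: ltW.
Qed.

Lemma near_optimal_mono {e e' f} : e <= e' -> near_optimal e f -> near_optimal e' f.
Proof. by move=> ee' [hf flam [b [rho opt]]]; split => //; exists b, rho; lra. Qed.

Lemma primal_obj_midpoint f g b1 b2 r1 r2 :
  primal_obj (fun x => 2^-1 * f x + 2^-1 * g x) (2^-1 * b1 + 2^-1 * b2) (2^-1 * r1 + 2^-1 * r2)
  <= 2^-1 * primal_obj f b1 r1 + 2^-1 * primal_obj g b2 r2.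
Proof.
have h0 : (0 : R) <= 2^-1 by rewrite invr_ge0 ler0n.
have h1 : (2^-1 : R) <= 1 by rewrite invf_le1 ?ler1n // ltr0n.
have m0 : 0 <= mR^-1 by rewrite invr_ge0 ler0n.
suff : \sum_i l (2^-1 * r1 + 2^-1 * r2 - ys i * (2^-1 * f (xs i) + 2^-1 * g (xs i)
                     + (2^-1 * b1 + 2^-1 * b2)))
    <= 2^-1 * \sum_i l (r1 - ys i * (f (xs i) + b1))
       + 2^-1 * \sum_i l (r2 - ys i * (g (xs i) + b2)).
  by rewrite /primal_obj => /(ler_wpM2l m0); lra.
rewrite !mulr_sumr -big_split; apply: ler_sum => i _.
have := l_convex (r1 - ys i * (f (xs i) + b1)) (r2 - ys i * (g (xs i) + b2)) _ h0 h1.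
have -> : (1 - 2^-1 : R) = 2^-1 by field.
by congr (l _ <= _); ring.
Qed.

Lemma near_optimal_midpoint {e f g} : near_optimal e f -> near_optimal e g ->
  near_optimal e (fun x => 2^-1 * f x + 2^-1 * g x).
Proof.
move=> [hf flam [b1 [r1 opt1]]] [hg glam [b2 [r2 opt2]]]; split.
- exact: (rkhs_lincomb HR).
- have := parallelogram HR hf hg; have := rkhs_pos HR (rkhs_sub HR hf hg); lra.
- exists (2^-1 * b1 + 2^-1 * b2), (2^-1 * r1 + 2^-1 * r2).
  by apply: le_trans (primal_obj_midpoint _ _ _ _ _ _) _; lra.
Qed.

Definition min_sqnorm (e : R) := inf [set ip f f | f in near_optimal e].

Lemma near_optimal_sqnorms_has_inf {e} : 0 < e -> has_inf [set ip f f | f in near_optimal e].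
Proof.
move=> e0; split; first by have [f nf] := near_optimal_nonempty e0; exists (ip f f), f.
by exists 0 => _ [f [hf _ _] <-]; exact: (rkhs_pos HR).
Qed.

Lemma min_sqnorm_le {e f} : 0 < e -> near_optimal e f -> min_sqnorm e <= ip f f.
Proof. by move=> e0 nf; apply: (ge_inf (near_optimal_sqnorms_has_inf e0).2); exists f. Qed.

Lemma min_sqnorm_antimono {e e'} : 0 < e -> e <= e' -> min_sqnorm e' <= min_sqnorm e.
Proof.
move=> e0 ee'; apply: lb_le_inf; first exact: (near_optimal_sqnorms_has_inf e0).1.
by move=> _ [f nf <-]; apply: (min_sqnorm_le _ (near_optimal_mono ee' nf)); lra.
Qed.

Definition tol (n : nat) : R := n.+1%:R^-1.

Lemma tol_gt0 n : 0 < tol n.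
Proof. by rewrite invr_gt0 ltr0Sn. Qed.

Lemma tol_antimono {n m} : (n <= m)%N -> tol m <= tol n.
Proof. by move=> nm; rewrite lef_pV2 ?posrE ?ltr0Sn // ler_nat. Qed.

Lemma tol_lt {c} : 0 < c -> exists N, tol N < c.
Proof.
move=> c0; have ci : 0 <= c^-1 by rewrite invr_ge0 ltW.
have := archi_boundP ci; set N := Num.bound _ => cN.
have cN1 : c^-1 < N.+1%:R by apply: lt_le_trans cN _; rewrite ler_nat.
exists N; rewrite /tol -div1r ltr_pdivrMr ?ltr0Sn //.
by move: cN1; rewrite -div1r ltr_pdivrMr //; lra.
Qed.

Lemma exists_min_sqnorm_seq : exists fs : nat -> X -> R, forall n,
  near_optimal (tol n) (fs n) /\ ip (fs n) (fs n) < min_sqnorm (tol n) + tol n.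
Proof.
suff /choice[fs Hfs] : forall n, exists f,
    near_optimal (tol n) f /\ ip f f < min_sqnorm (tol n) + tol n by exists fs.
move=> n; have := inf_adherent (tol_gt0 n) (near_optimal_sqnorms_has_inf (tol_gt0 n)).
by move=> [_ [f nf <-] close]; exists f.
Qed.

Section MinimalSqnormSequence.
Variable fs : nat -> X -> R.
Hypothesis fs_min : forall n,
  near_optimal (tol n) (fs n) /\ ip (fs n) (fs n) < min_sqnorm (tol n) + tol n.

Lemma rkhs_min_sqnorm_seq n : Hs (fs n).
Proof. by case: (fs_min n) => -[]. Qed.

Lemma min_sqnorm_seq_cauchy e : 0 < e -> exists N, forall m n, (N <= m)%N -> (N <= n)%N ->
  hnorm (fun x => fs m x - fs n x) < e.
Proof.
move=> e0; set c := e ^+ 2 / 8; have c0 : 0 < c by rewrite divr_gt0 ?exprn_gt0.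
pose D := [set min_sqnorm (tol n) | n in [set: nat]].
have hD : has_sup D.
  split; first by exists (min_sqnorm (tol 0)), 0.
  exists (lambda ^+ 2) => _ [n _ <-]; have [nf _] := fs_min n.
  by apply: le_trans (min_sqnorm_le (tol_gt0 n) nf) _; case: nf.
have Dub n : min_sqnorm (tol n) <= sup D by apply: (sup_upper_bound hD); exists n.
have [_ [N1 _ <-] N1near] := sup_adherent c0 hD.
have [N2 N2tol] := tol_lt c0.
exists (maxn N1 N2) => m n hm hn; set N := maxn N1 N2.
have tolN : tol N < c := le_lt_trans (tol_antimono (leq_maxr N1 N2)) N2tol.
have minN : sup D - c < min_sqnorm (tol N).
  by apply: lt_le_trans N1near (min_sqnorm_antimono (tol_gt0 N) (tol_antimono (leq_maxl _ _))).
have tail j : (N <= j)%N ->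
    near_optimal (tol N) (fs j) /\ ip (fs j) (fs j) < sup D + tol N.
  move=> Nj; have [nf fj] := fs_min j; split; first exact: near_optimal_mono (tol_antimono Nj) nf.
  by have := Dub j; have := tol_antimono Nj; lra.
have [[nm bm] [nn bn]] := (tail m hm, tail n hn).
have mid := min_sqnorm_le (tol_gt0 N) (near_optimal_midpoint nm nn).
have par := parallelogram HR (rkhs_min_sqnorm_seq m) (rkhs_min_sqnorm_seq n).
apply: hnorm_lt => //; have -> : e ^+ 2 = 8 * c by rewrite /c; field.
lra.
Qed.

Lemma lagrangian_limit_le {f} : Hs f ->
  (forall e : R, 0 < e -> exists N, forall n, (N <= n)%N -> hnorm (fun x => fs n x - f x) < e) ->
  forall a, dual_feasible a -> lagrangian f a <= primal_inf.
Proof.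
move=> hf cvg a fa; apply/ler_addgt0Pr => e e0.
have kb := kexp_bound_ge0; set d := e / 2 / (kexp_bound + 1).
have d0 : 0 < d by rewrite !divr_gt0 //; lra.
have [N1 HN1] := cvg d d0.
have [N2 HN2] : exists N, tol N < e / 2 by apply: tol_lt; lra.
set N := maxn N1 N2.
have tolN : tol N < e / 2 := le_lt_trans (tol_antimono (leq_maxr N1 N2)) HN2.
have LN : lagrangian (fs N) a <= primal_inf + tol N.
  have [[_ _ [b [rho opt]]] _] := fs_min N.
  exact: le_trans (lagrangian_le_primal _ _ _ fa) opt.
have shift : ip (fun x => fs N x - f x) (signed_kexp a) <= d * kexp_bound.
  apply: le_trans (ip_le_hnorm HR (rkhs_sub HR (rkhs_min_sqnorm_seq N) hf) (rkhs_kexp _)) _.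
  apply: ler_pM; rewrite ?hnorm_ge0 //; first exact/ltW/HN1/leq_maxl.
  by apply: hnorm_kexp_le => i; exact: dual_feasible_signed_le1.
have : d * kexp_bound <= e / 2.
  have <- : d * (kexp_bound + 1) = e / 2 by rewrite /d divfK // gt_eqF //; lra.
  by rewrite ler_wpM2l ?(ltW d0) //; lra.
rewrite (lagrangian_shift a hf (rkhs_min_sqnorm_seq N)); lra.
Qed.

End MinimalSqnormSequence.

Lemma primal_optimum_exists : exists f b rho, [/\ Hs f, ip f f <= lambda ^+ 2 &
  forall f' b' rho', Hs f' -> ip f' f' <= lambda ^+ 2 ->
    primal_obj f b rho <= primal_obj f' b' rho'].
Proof.
have [fs fs_min] := exists_min_sqnorm_seq.
have [f [hf cvg]] :=
  rkhs_complete HR (rkhs_min_sqnorm_seq _ fs_min) (min_sqnorm_seq_cauchy _ fs_min).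
have flam : ip f f <= lambda ^+ 2.
  have fs_lam n : hnorm (fs n) <= lambda.
    by have [[_ ? _] _] := fs_min n; apply: hnorm_le => //; exact: ltW.
  have := hnorm_le_limit HR hf (rkhs_min_sqnorm_seq _ fs_min) fs_lam cvg.
  by rewrite -(hnorm_sqr HR hf); have := hnorm_ge0 ip f; nra.
have [b [rho [a [fa E]]]] := primal_attains_lagrangian f.
exists f, b, rho; split => // f' b' rho' hf' f'lam.
rewrite E; apply: le_trans (lagrangian_limit_le _ fs_min hf cvg a fa) _.
exact: primal_inf_le.
Qed.

Definition smoothed_dual (ep : R) (a : 'I_m1 -> R) :=
  - (lambda * Num.sqrt (ip (signed_kexp a) (signed_kexp a) + ep ^+ 2)) - conj_cost a.

Lemma smoothed_dual_le ep a : smoothed_dual ep a <= dual_obj a.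
Proof.
rewrite /smoothed_dual /dual_obj lerD2r lerN2 ler_wpM2l ?(ltW lambda_gt0) //.
by rewrite ler_sqrt ?lerDl ?sqr_ge0 // addr_ge0 ?sqr_ge0 ?(rkhs_pos HR (rkhs_kexp _)).
Qed.

Lemma smoothed_dual_has_sup ep : has_sup [set smoothed_dual ep a | a in dual_feasible].
Proof.
split; first by have [a fa] := dual_feasible_exists; exists (smoothed_dual ep a), a.
have h0 := rkhs_zero HR.
have h0lam : ip (fun _ => 0) (fun _ => 0) <= lambda ^+ 2 by rewrite (ip0f HR h0) sqr_ge0.
exists (primal_obj (fun _ => 0) 0 0) => _ [a fa <-].
apply: le_trans (smoothed_dual_le ep a) _.
exact: le_trans (dual_le_lagrangian h0 h0lam fa) (lagrangian_le_primal _ _ _ fa).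
Qed.

Section SmoothedWitness.
Variables (ep : R) (aS : 'I_m1 -> R).
Hypotheses (ep0 : 0 < ep) (ep1 : ep <= 1) (faS : dual_feasible aS).

Let u := signed_kexp aS.
Let hu : Hs u := rkhs_kexp _.
Let N := Num.sqrt (ip u u + ep ^+ 2).

Lemma smoothed_norm_sqr : N ^+ 2 = ip u u + ep ^+ 2.
Proof. by rewrite sqr_sqrtr // addr_ge0 ?sqr_ge0 ?(rkhs_pos HR hu). Qed.

Lemma smoothed_norm_gt0 : 0 < N.
Proof. by rewrite sqrtr_gt0 ltr_wpDl ?(rkhs_pos HR hu) ?exprn_gt0. Qed.

Lemma ep_le_smoothed_norm : ep <= N.
Proof.
have := smoothed_norm_gt0; have := smoothed_norm_sqr; have := rkhs_pos HR hu.
by rewrite !expr2 => *; nra.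
Qed.

(* Smoothing by [ep] keeps [N] positive, so [u] can always be rescaled to norm at most [lambda]. *)
Definition smoothed_witness : X -> R := fun x => lambda / N * u x.

Lemma smoothed_witness_feasible :
  Hs smoothed_witness /\ ip smoothed_witness smoothed_witness <= lambda ^+ 2.
Proof.
split; first exact: (rkhs_scale HR).
rewrite /smoothed_witness (ipZ_sqr HR _ hu) expr_div_n mulrAC.
rewrite ler_pdivrMr ?exprn_gt0 ?smoothed_norm_gt0 // smoothed_norm_sqr.
rewrite ler_wpM2l ?sqr_ge0 // lerDl.
exact: sqr_ge0.
Qed.

Section Direction.
Variable a : 'I_m1 -> R.
Hypothesis fa : dual_feasible a.
Let d := kexp (fun i => (a i - aS i) * ys i).
Let hd : Hs d := rkhs_kexp _.

Lemma smoothed_dual_mix_ge t : 0 <= t -> t <= 1 ->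
  - (lambda * (N + (2 * t * ip u d + t ^+ 2 * ip d d) / (2 * N)))
  - ((1 - t) * conj_cost aS + t * conj_cost a)
  <= smoothed_dual ep (fun i => (1 - t) * aS i + t * a i).
Proof.
move=> t0 t1; rewrite /smoothed_dual signed_kexp_mix -/u -/d (ip_lincomb_sqr HR) //.
set y := 1 ^+ 2 * ip u u + 2 * 1 * t * ip u d + t ^+ 2 * ip d d.
have x0 : 0 < ip u u + ep ^+ 2 by rewrite ltr_wpDl ?(rkhs_pos HR hu) ?exprn_gt0.
have y0 : 0 <= y + ep ^+ 2.
  rewrite /y -(ip_lincomb_sqr HR 1 t hu hd) addr_ge0 ?sqr_ge0 // (rkhs_pos HR) //.
  exact: (rkhs_lincomb HR).
have := sqrt_le_tangent x0 y0; rewrite -/N.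
have -> : y + ep ^+ 2 - (ip u u + ep ^+ 2) = 2 * t * ip u d + t ^+ 2 * ip d d by rewrite /y; ring.
move=> /(ler_wpM2l (ltW lambda_gt0)); have := conj_cost_convex faS fa t0 t1; lra.
Qed.

Lemma lagrangian_smoothed_witness :
  lagrangian smoothed_witness a
  = - (lambda * N) + lambda * ep ^+ 2 / N - lambda * ip u d / N - conj_cost a.
Proof.
have ua : signed_kexp a = (fun x => 1 * u x + 1 * d x).
  rewrite -signed_kexp_mix; congr signed_kexp; apply: funext => i; ring.
rewrite /lagrangian -(ip_kexp _ (rkhs_scale HR _ hu)) -/(signed_kexp a) ua.
rewrite (ipZl HR _ hu); last exact: (rkhs_lincomb HR).
rewrite (ip_lincombr HR) //.
have -> : ip u u = N ^+ 2 - ep ^+ 2 by rewrite smoothed_norm_sqr; ring.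
by field; rewrite gt_eqF ?smoothed_norm_gt0.
Qed.

Lemma lagrangian_smoothed_witness_le :
  smoothed_dual ep (fun i => (1 - ep ^+ 2) * aS i + ep ^+ 2 * a i)
    < smoothed_dual ep aS + ep ^+ 3 ->
  lagrangian smoothed_witness a
    <= smoothed_dual ep aS + (1 + lambda + lambda * kexp_bound ^+ 2) * ep.
Proof.
move=> near; set t := ep ^+ 2; set P := ip u d; set Q := ip d d.
have t0 : 0 < t by rewrite exprn_gt0.
have t1 : t <= 1 by rewrite /t expr2 mulr_ile1 ?(ltW ep0).
have N0 := smoothed_norm_gt0; have Q0 : 0 <= Q := rkhs_pos HR hd.
have Qk : Q <= kexp_bound ^+ 2.
  have : hnorm d <= kexp_bound.
    by apply: hnorm_kexp_le => i; exact: dual_feasible_signed_diff_le1.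
  rewrite /Q -(hnorm_sqr HR hd); have := hnorm_ge0 ip d; rewrite !expr2; nra.
have SaS : smoothed_dual ep aS = - (lambda * N) - conj_cost aS by [].
(* first-order optimality of [aS] in the direction of [a], divided by the step [t] *)
have step : - (lambda * P / N) - lambda * t * Q / (2 * N) + conj_cost aS - conj_cost a < ep.
  rewrite -(ltr_pM2l t0); have -> : t * ep = ep ^+ 3 by rewrite /t -exprSr.
  have mix := smoothed_dual_mix_ge t (ltW t0) t1; rewrite -/P -/Q in mix.
  have -> : t * (- (lambda * P / N) - lambda * t * Q / (2 * N) + conj_cost aS - conj_cost a)
    = - (lambda * (N + (2 * t * P + t ^+ 2 * Q) / (2 * N)))
      - ((1 - t) * conj_cost aS + t * conj_cost a) - smoothed_dual ep aS.
    by rewrite SaS; field; rewrite gt_eqF.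
  lra.
set r := ep / N.
have r1 : r <= 1 by rewrite ler_pdivrMr // mul1r ep_le_smoothed_norm.
have r0 : 0 <= r by rewrite divr_ge0 // ltW.
have lep : 0 < lambda * ep by rewrite mulr_gt0.
have e1 : lambda * ep ^+ 2 / N = lambda * ep * r by rewrite /r; field; rewrite gt_eqF.
have e2 : lambda * t * Q / (2 * N) = lambda * ep * (r * Q) / 2.
  by rewrite /r /t; field; rewrite gt_eqF.
have rQ : r * Q <= kexp_bound ^+ 2 by nra.
have rQb := ler_wpM2l (ltW lep) rQ; have kb := mulr_ge0 (ltW lep) (sqr_ge0 kexp_bound).
have rb : lambda * ep * r <= lambda * ep by nra.
rewrite e2 in step; rewrite lagrangian_smoothed_witness -/P SaS e1.
have -> : (1 + lambda + lambda * kexp_bound ^+ 2) * ep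
  = ep + lambda * ep + lambda * ep * kexp_bound ^+ 2 by ring.
lra.
Qed.

End Direction.
End SmoothedWitness.

Lemma no_duality_gap {Fs : R} :
  (forall f b rho, Hs f -> ip f f <= lambda ^+ 2 -> Fs <= primal_obj f b rho) ->
  forall eta, 0 < eta -> exists a, dual_feasible a /\ Fs - eta <= dual_obj a.
Proof.
move=> Fs_le eta eta0; have kb := kexp_bound_ge0.
set C := 1 + lambda + lambda * kexp_bound ^+ 2.
have C0 : 0 <= C.
  have : 0 <= lambda * kexp_bound ^+ 2 by rewrite mulr_ge0 ?sqr_ge0 ?(ltW lambda_gt0).
  by rewrite /C; have := lambda_gt0; lra.
set ep := Num.min 1 (eta / (C + 1)).
have ep0 : 0 < ep by rewrite lt_min ltr01 divr_gt0 //; lra.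
have ep1 : ep <= 1 by rewrite ge_min lexx.
have epC : (C + 1) * ep <= eta.
  have : ep <= eta / (C + 1) by rewrite ge_min lexx orbT.
  by rewrite ler_pdivlMr; lra.
set sig := sup [set smoothed_dual ep a | a in dual_feasible].
have hS := smoothed_dual_has_sup ep.
have [_ [aS faS <-] aSnear] := sup_adherent (exprn_gt0 3 ep0) hS.
have Fs_sig : Fs <= sig + C * ep.
  have [wit wlam] := smoothed_witness_feasible ep aS ep0.
  have [b [rho [a [fa E]]]] := primal_attains_lagrangian (smoothed_witness ep aS).
  apply: le_trans (Fs_le _ b rho wit wlam) _; rewrite E.
  have ep21 : ep ^+ 2 <= 1 by rewrite expr2 mulr_ile1 ?(ltW ep0).
  have near : smoothed_dual ep (fun i => (1 - ep ^+ 2) * aS i + ep ^+ 2 * a i)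
      < smoothed_dual ep aS + ep ^+ 3.
    have : smoothed_dual ep (fun i => (1 - ep ^+ 2) * aS i + ep ^+ 2 * a i) <= sig.
      apply: (sup_upper_bound hS); eexists => //.
      exact: dual_feasible_convex faS fa (sqr_ge0 ep) ep21.
    by move: aSnear; rewrite -/sig; lra.
  apply: le_trans (lagrangian_smoothed_witness_le ep aS ep0 ep1 faS a fa near) _.
  by rewrite lerD2r; apply: (sup_upper_bound hS); exists aS.
have [_ [a fa <-] anear] := sup_adherent ep0 hS.
exists a; split => //; apply: le_trans (smoothed_dual_le ep a); rewrite -/sig in anear; nra.
Qed.

Lemma kexp_class_diff a :
  (fun x => \sum_(i | ys i == 1) a i * k x (xs i) - \sum_(i | ys i == -1) a i * k x (xs i))
  = signed_kexp a.
Proof.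
apply: funext => x; rewrite /signed_kexp /kexp sum_by_class; congr (_ + _).
  by apply: eq_bigr => i /eqP ->; ring.
by rewrite -sumrN; apply: eq_bigr => i /eqP ->; ring.
Qed.

Lemma fconj_class_sum (s : R) a : (forall i, ys i = s -> 0 <= a i) ->
  \sum_(i | ys i == s) fconj l (mR * a i) = (\sum_(i | ys i == s) lconj (mR * a i))%:E.
Proof.
move=> a0; rewrite -sumEFin; apply: eq_bigr => i /eqP yi.
by rewrite fconj_lconj // mulr_ge0 ?ler0n ?a0.
Qed.

Lemma dual_feasible_Uset {a} : dual_feasible a ->
  let cp := mR^-1 * \sum_(i | ys i == 1) lconj (mR * a i) in
  let cn := mR^-1 * \sum_(i | ys i == -1) lconj (mR * a i) in
  let fp x := \sum_(i | ys i == 1) a i * k x (xs i) in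
  let fn x := \sum_(i | ys i == -1) a i * k x (xs i) in
  [/\ Uset k l xs ys 1 cp fp, Uset k l xs ys (-1) cn fn &
      cp + cn + lambda * hnorm (fun x => fp x - fn x) = - dual_obj a].
Proof.
case=> a0 a1 a2 cp cn fp fn; split.
- exists a; split=> //; split=> //; split=> //.
  by rewrite fconj_class_sum // -EFinM.
- exists a; split=> //; split=> //; split=> //.
  by rewrite fconj_class_sum // -EFinM.
- rewrite kexp_class_diff /dual_obj /conj_cost (sum_by_class (fun i => lconj _)).
  by rewrite /cp /cn; ring.
Qed.

Lemma Uset_dual_feasible {cp cn fp fn} :
  Uset k l xs ys 1 cp fp -> Uset k l xs ys (-1) cn fn ->
  exists2 a, dual_feasible a & - dual_obj a <= cp + cn + lambda * hnorm (fun x => fp x - fn x).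
Proof.
move=> [ap [ap0 [ap1 [apc ->]]]] [an [an0 [an1 [anc ->]]]].
rewrite fconj_class_sum // -EFinM lee_fin in apc.
rewrite fconj_class_sum // -EFinM lee_fin in anc.
pose a i := if ys i == 1 then ap i else an i.
have ap_a i : ys i == 1 -> ap i = a i by move/eqP => yi; rewrite /a yi eqxx.
have an_a i : ys i == -1 -> an i = a i by move/eqP => yi; rewrite /a yi eq_N1_1.
have fa : dual_feasible a.
  split=> [i | |].
  - by case: (ys_sign i) => yi; rewrite /a yi ?eqxx ?eq_N1_1; [exact: ap0 | exact: an0].
  - by rewrite -[RHS]ap1; apply: eq_bigr => i /ap_a.
  - by rewrite -[RHS]an1; apply: eq_bigr => i /an_a.
exists a => //; have [_ _ <-] := dual_feasible_Uset fa.
rewrite (eq_bigr (fun i => lconj (mR * a i))) in apc; last by move=> i /ap_a ->.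
rewrite (eq_bigr (fun i => lconj (mR * a i))) in anc; last by move=> i /an_a ->.
have -> : (fun x => \sum_(i | ys i == 1) ap i * k x (xs i)
                   - \sum_(i | ys i == -1) an i * k x (xs i))
  = (fun x => \sum_(i | ys i == 1) a i * k x (xs i) - \sum_(i | ys i == -1) a i * k x (xs i)).
  by apply: funext => x; congr (_ - _); apply: eq_bigr => i yi; rewrite ?ap_a ?an_a.
lra.
Qed.

Lemma primal_attained_no_gap : exists f b rho, [/\ Hs f, ip f f <= lambda ^+ 2,
  (forall f' b' rho', Hs f' -> ip f' f' <= lambda ^+ 2 ->
     primal_obj f b rho <= primal_obj f' b' rho') &
  (primal_obj f b rho)%:E =
  (- ereal_inf [set r : \bar R | exists (cp cn : R) (fp fn : X -> R),
      [/\ Uset k l xs ys 1 cp fp, Uset k l xs ys (-1) cn fn &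
          r = (cp + cn + lambda * hnorm (fun x => fp x - fn x))%:E]])%E].
Proof.
have [f [b [rho [hf flam opt]]]] := primal_optimum_exists.
exists f, b, rho; split => //.
set D := [set r : \bar R | _].
suff -> : ereal_inf D = (- primal_obj f b rho)%:E by rewrite EFinN oppeK.
apply/eqP; rewrite eq_le; apply/andP; split.
- apply/lee_addgt0Pr => e e0.
  have [a [fa gap]] := no_duality_gap opt e e0.
  have [up un value] := dual_feasible_Uset fa.
  apply: ge_ereal_inf; eexists; first by do 4 eexists; split; [exact: up | exact: un | reflexivity].
  by rewrite -EFinD lee_fin value; lra.
- apply/ereal_infP => _ [cp [cn [fp [fn [up un ->]]]]].
  have [a fa value] := Uset_dual_feasible up un.
  rewrite lee_fin; have := dual_le_lagrangian hf flam fa.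
  by have := lagrangian_le_primal f b rho fa; lra.
Qed.

End Duality.
End ConvexLoss.

Theorem lemma1 (R : realType) (X : pseudoMetricType R)
  (k : X -> X -> R) (K : R) (Hs : set (X -> R)) (ip : (X -> R) -> (X -> R) -> R)
  (l : R -> R) (m1 : nat) (xs : 'I_m1 -> X) (y : 'I_m1 -> R) (lambda : R) :
  hausdorff_space X ->
  compact [set: X] ->
  continuous (fun p : X * X => k p.1 p.2) ->
  is_RKHS k Hs ip ->
  universal_space Hs ->
  (forall x, Num.sqrt (k x x) <= K) ->
  {homo l : a b / a <= b} ->
  convex_fun l ->
  (forall z, 0 <= l z) ->
  (forall M : R, 0 < M -> exists z0 : R, forall z g : R,
      z0 <= z -> subgrad l z g -> M <= g) ->
  (forall i, y i = 1 \/ y i = -1) ->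
  (exists i, y i = 1) ->
  (exists i, y i = -1) ->
  0 < lambda ->
  exists (f : X -> R) (b rho : R),
    [/\ Hs f, ip f f <= lambda ^+ 2,
      (forall (f' : X -> R) (b' rho' : R), Hs f' -> ip f' f' <= lambda ^+ 2 ->
         primal_obj l xs y f b rho <= primal_obj l xs y f' b' rho') &
      (primal_obj l xs y f b rho)%:E =
      (- ereal_inf [set r : \bar R | exists (cp cn : R) (fp fn : X -> R),
          [/\ Uset k l xs y 1 cp fp, Uset k l xs y (-1) cn fn &
              r = (cp + cn + lambda * hnorm ip (fun x => fp x - fn x))%:E]])%E].
Proof.
move=> _ _ _ HR _ _ l_mono l_convex l_ge0 l_unbounded ys_sign ys_pos ys_neg lambda_gt0.
by apply: primal_attained_no_gap.
Qed.
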